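(* Let $R:\mathbb{C}^{N_s}\to\mathbb{R}$ be the function $$R(\boldsymbol{\theta})=\sum_{k=1}^K\omega_k\Big[\log\det(\sigma_0^2\mathbf{I}+\mathbf{H}_k(\boldsymbol{\theta})\bar{\mathbf{W}}\mathbf{H}_k(\boldsymbol{\theta})^{\mathsf H})-\log\det(\sigma_0^2\mathbf{I}+\mathbf{H}_k(\boldsymbol{\theta})\bar{\mathbf{W}}_k\mathbf{H}_k(\boldsymbol{\theta})^{\mathsf H})\Big],$$ where $\mathbf{H}_k(\boldsymbol{\theta})=\mathbf{D}_k+\mathbf{U}_k\mathrm{diag}(\boldsymbol{\theta})\mathbf{G}$, $\bar{\mathbf{W}}=\sum_{j}\mathbf{W}_j\mathbf{W}_j^{\mathsf H}$, $\bar{\mathbf{W}}_k=\sum_{j\neq k}\mathbf{W}_j\mathbf{W}_j^{\mathsf H}$ for fixed matrices $\mathbf{G}\in\mathbb{C}^{N_s\times N_t}$, $\mathbf{U}_k\in\mathbb{C}^{N_r\times N_s}$, $\mathbf{D}_k\in\mathbb{C}^{N_r\times N_t}$, $\mathbf{W}_k\in\mathbb{C}^{N_t\times N_d}$, $\sigma_0^2>0$ and weights $\omega_k$. Let $\mathcal{Q}=\{\boldsymbol{\theta}\in\mathbb{C}^{N_s}:|\theta_n|=1,\ n=1,\dots,N_s\}$, let $\Pi_{\mathcal{Q}}$ denote the projection onto $\mathcal{Q}$, let $\boldsymbol{\theta}^{(\ell)}\in\mathcal{Q}$, and let $\boldsymbol{\Xi}=\mathrm{diag}\big(1/|\nabla_{\boldsymbol{\theta}}R(\boldsymbol{\theta}^{(\ell)})|\big)$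 (elementwise modulus and division). For a step size $\alpha>0$ set $\boldsymbol{\theta}(\alpha)=\Pi_{\mathcal{Q}}\big(\boldsymbol{\theta}^{(\ell)}+\alpha\boldsymbol{\Xi}\nabla_{\boldsymbol{\theta}}R(\boldsymbol{\theta}^{(\ell)})\big)$. Consider the backtracking line search that starts from an initial $\alpha=c>0$ and replaces $\alpha\leftarrow\eta\alpha$ (with fixed $0<\eta<1$) until $$R(\boldsymbol{\theta}(\alpha))\ge R(\boldsymbol{\theta}^{(\ell)})+\frac{\beta}{2N_s}\|\boldsymbol{\theta}(\alpha)-\boldsymbol{\theta}^{(\ell)}\|^2,$$ where $\beta>0$ is sufficiently small. Then this line search terminates after a finite number of steps, for any positive initial step size $c$.
   Context: The complex-valued gradient is $\nabla_{\boldsymbol{\theta}}R=\frac12\big(\frac{\partial R}{\partial\Re\{\boldsymbol{\theta}\}}+j\frac{\partial R}{\partial\Im\{\boldsymbol{\theta}\}}\big)$; $\mathrm{diag}(\mathbf{x})$ is the diagonal matrix with diagonal $\mathbf{x}$; $\|\cdot\|$ is the Euclidean norm; $\log$ is the natural logarithm. The procedure is the scaled projected gradient step for the RIS phase shifts $\boldsymbol{\theta}$ (unit-modulus constraint) in weighted sum-rate maximization for an RIS-aided downlink multiuser MIMO system with fixed precoders $\mathbf{W}_k$. *)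

From HB Require Import structures.
From mathcomp Require Import all_boot all_order all_algebra.
From mathcomp Require Import complex.
From mathcomp Require Import all_classical all_reals all_analysis.

Set Implicit Arguments.
Unset Strict Implicit.
Unset Printing Implicit Defensive.

Import Order.TTheory GRing.Theory Num.Theory.
Local Open Scope ring_scope.
Local Open Scope complex_scope.

Section RIS.
Variable R : realType.
Local Notation C := R[i].

Definition hadj m n (A : 'M[C]_(m, n)) : 'M[C]_(n, m) := (map_mx conjc A)^T.

(* log det of a (Hermitian positive definite) matrix: natural log of its
   (real, positive) determinant *)
Definition logdet n (M : 'M[C]_n) : R := ln (complex.Re (\det M)).

Definition Hk Ns Nt Nr (D : 'M[C]_(Nr, Nt)) (U : 'M[C]_(Nr, Ns))
  (G : 'M[C]_(Ns, Nt)) (th : 'cV[C]_Ns) : 'M[C]_(Nr, Nt) :=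
  D + U *m diag_mx th^T *m G.

Definition Wbar K Nt Nd (W : 'I_K -> 'M[C]_(Nt, Nd)) : 'M[C]_Nt :=
  \sum_(j < K) W j *m hadj (W j).
Definition Wbark K Nt Nd (W : 'I_K -> 'M[C]_(Nt, Nd)) (k : 'I_K) : 'M[C]_Nt :=
  \sum_(j < K | j != k) W j *m hadj (W j).

Definition wsr K Ns Nt Nr Nd (G : 'M[C]_(Ns, Nt)) (U : 'I_K -> 'M[C]_(Nr, Ns))
  (D : 'I_K -> 'M[C]_(Nr, Nt)) (W : 'I_K -> 'M[C]_(Nt, Nd)) (s2 : R)
  (w : 'I_K -> R) (th : 'cV[C]_Ns) : R :=
  \sum_(k < K)
    w k * (logdet ((s2%:C)%:M + Hk (D k) (U k) G th *m Wbar W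
                                 *m hadj (Hk (D k) (U k) G th))
         - logdet ((s2%:C)%:M + Hk (D k) (U k) G th *m Wbark W k
                                 *m hadj (Hk (D k) (U k) G th))).

Definition evec n (i : 'I_n) : 'cV[C]_n := \col_j (j == i)%:R.

Definition dRe n (f : 'cV[C]_n -> R) (th : 'cV[C]_n) (i : 'I_n) : R :=
  derive1 (fun t : R => f (th + t%:C *: evec i)) 0.
Definition dIm n (f : 'cV[C]_n -> R) (th : 'cV[C]_n) (i : 'I_n) : R :=
  derive1 (fun t : R => f (th + ('i * t%:C) *: evec i)) 0.

Definition cgrad n (f : 'cV[C]_n -> R) (th : 'cV[C]_n) : 'cV[C]_n :=
  \col_i (((dRe f th i)%:C + 'i * (dIm f th i)%:C) / 2%:R).

Definition inQ n (th : 'cV[C]_n) : Prop := forall i, `|th i 0| = 1.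

(* projection onto Q: x_i / |x_i| (convention: 1 if x_i = 0) *)
Definition projQ n (x : 'cV[C]_n) : 'cV[C]_n :=
  \col_i (if x i 0 == 0 then 1 else x i 0 / `|x i 0|).

(* Xi = diag(1 / |g|) (elementwise; convention 1/0 = 0) *)
Definition Xi n (g : 'cV[C]_n) : 'M[C]_n := diag_mx (\row_i (`|g i 0|)^-1).

Definition sqnorm n (v : 'cV[C]_n) : R :=
  \sum_i (complex.Re (v i 0) ^+ 2 + complex.Im (v i 0) ^+ 2).

Definition theta_step n (f : 'cV[C]_n -> R) (th : 'cV[C]_n) (alpha : R)
  : 'cV[C]_n :=
  projQ (th + alpha%:C *: (Xi (cgrad f th) *m cgrad f th)).

Definition accept n (f : 'cV[C]_n -> R) (th : 'cV[C]_n) (beta alpha : R)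
  : Prop :=
  f (theta_step f th alpha) >=
  f th + beta / (2 * n%:R) * sqnorm (theta_step f th alpha - th).

End RIS.

(** The objective has at θ a first-order expansion
    R(θ + d) = R(θ) + <g, d> + O(|d|²) for the real inner product on C^n,
    with |R(θ + d) - R(θ)| = O(|d|): it is built from the entries of θ by
    sums, products, conjugation and logarithms of determinants whose real
    parts do not vanish, since σ² I + H W Hᴴ is Hermitian positive definite.
    Its Wirtinger gradient is g / 2, so the scaled step moves each θ_n along
    the unit direction u_n of g_n.  Projecting θ_n + α u_n back onto the unit
    circle moves θ_n by at most 2α and increases <g_n, .> by at least
    |g_n| (α q_n² - 6 α²), where q_n is the tangential component of u_n at
    θ_n.  Hence R(θ(α)) - R(θ) >= α S - O(α²) with S = Σ |g_n| q_n², while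
    |θ(α) - θ|² <= 4 N α².  If S > 0 every small enough step is accepted, and
    if S = 0 the step leaves θ unchanged; backtracking reaches such a step
    since c ηᵐ -> 0. *)

From HB Require Import structures.
From mathcomp Require Import all_boot all_order all_algebra.
From mathcomp Require Import complex.
From mathcomp Require Import all_classical all_reals all_analysis.
From mathcomp Require Import ring lra.
Import Order.TTheory GRing.Theory Num.Theory numFieldNormedType.Exports.

Set Implicit Arguments.
Unset Strict Implicit.
Unset Printing Implicit Defensive.

Local Open Scope ring_scope.
Local Open Scope complex_scope.

Section RealFacts.
Variable R : realType.

Lemma normrM_le_sqr (x y : R) : `|x * y| <= (x ^+ 2 + y ^+ 2) / 2.
Proof.
rewrite normrM -(real_normK (num_real x)) -(real_normK (num_real y)).
have := sqr_ge0 (`|x| - `|y|); nra.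
Qed.

Lemma sqrD3_le (x y z : R) : (x + y + z) ^+ 2 <= 3 * (x ^+ 2 + y ^+ 2 + z ^+ 2).
Proof.
have := sqr_ge0 (x - y); have := sqr_ge0 (y - z); have := sqr_ge0 (x - z); nra.
Qed.

Lemma mul_increment_approx (F G u v lu lv Ku Kv Mu Mv s : R) : 0 <= s ->
  `|u - lu| <= Ku * s -> `|v - lv| <= Kv * s -> u ^+ 2 <= Mu * s -> v ^+ 2 <= Mv * s ->
  `|(F + u) * (G + v) - F * G - (F * lv + G * lu)| <=
    (`|F| * Kv + `|G| * Ku + (Mu + Mv) / 2) * s.
Proof.
move=> s0 hu hv hu2 hv2.
have -> : (F + u) * (G + v) - F * G - (F * lv + G * lu) =
  F * (v - lv) + G * (u - lu) + u * v by ring.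
have : `|F * (v - lv)| <= `|F| * (Kv * s) by rewrite normrM ler_wpM2l.
have : `|G * (u - lu)| <= `|G| * (Ku * s) by rewrite normrM ler_wpM2l.
have := normrM_le_sqr u v.
have := ler_normD (F * (v - lv) + G * (u - lu)) (u * v).
have := ler_normD (F * (v - lv)) (G * (u - lu)).
lra.
Qed.

Lemma mul_increment_sqr_le (F G u v Mu Mv s r : R) : 0 <= s -> s <= r -> 0 <= Mv ->
  u ^+ 2 <= Mu * s -> v ^+ 2 <= Mv * s ->
  ((F + u) * (G + v) - F * G) ^+ 2 <= 3 * (F ^+ 2 * Mv + G ^+ 2 * Mu + Mu * Mv * r) * s.
Proof.
move=> s0 sr Mv0 hu2 hv2.
have -> : (F + u) * (G + v) - F * G = F * v + G * u + u * v by ring.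
apply: le_trans (sqrD3_le _ _ _) _; rewrite !exprMn.
have : u ^+ 2 * v ^+ 2 <= Mu * s * (Mv * r).
  apply: ler_pM; rewrite ?sqr_ge0 //.
  by apply: le_trans hv2 _; rewrite ler_wpM2l.
have : F ^+ 2 * v ^+ 2 <= F ^+ 2 * (Mv * s) by rewrite ler_wpM2l ?sqr_ge0.
have : G ^+ 2 * u ^+ 2 <= G ^+ 2 * (Mu * s) by rewrite ler_wpM2l ?sqr_ge0.
lra.
Qed.

Lemma comp_increment_approx (D h l c KK K M s : R) : 0 <= KK ->
  `|D - c * h| <= KK * h ^+ 2 -> `|h - l| <= K * s -> h ^+ 2 <= M * s ->
  `|D - c * l| <= (KK * M + `|c| * K) * s.
Proof.
move=> KK0 hD hl h2.
have -> : D - c * l = (D - c * h) + c * (h - l) by ring.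
apply: le_trans (ler_normD _ _) _; rewrite normrM.
have : `|c| * `|h - l| <= `|c| * (K * s) by rewrite ler_wpM2l.
have : KK * h ^+ 2 <= KK * (M * s) by rewrite ler_wpM2l.
lra.
Qed.

Lemma comp_increment_sqr_le (D h c KK rr M s : R) : 0 <= KK -> 0 <= rr -> `|h| <= rr ->
  `|D - c * h| <= KK * h ^+ 2 -> h ^+ 2 <= M * s -> D ^+ 2 <= (`|c| + KK * rr) ^+ 2 * M * s.
Proof.
move=> KK0 rr0 hrr hD h2.
have hD' : `|D| <= (`|c| + KK * rr) * `|h|.
  have hKK : KK * h ^+ 2 <= KK * rr * `|h|.
    by rewrite -(real_normK (num_real h)) expr2 -mulrA ler_wpM2l // ler_wpM2r.
  have -> : D = (D - c * h) + c * h by ring.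
  by apply: le_trans (ler_normD _ _) _; rewrite normrM; lra.
have B0 : 0 <= `|c| + KK * rr by rewrite addr_ge0 ?mulr_ge0.
rewrite -(real_normK (num_real D)).
apply: le_trans (_ : ((`|c| + KK * rr) * `|h|) ^+ 2 <= _).
  by rewrite ler_pXn2r ?nnegrE ?mulr_ge0.
have := ler_wpM2l (sqr_ge0 (`|c| + KK * rr)) h2.
by rewrite exprMn real_normK ?num_real // !mulrA.
Qed.

Lemma ln1D_approx (u : R) : `|u| <= 1 / 2 -> `|ln (1 + u) - u| <= 2 * u ^+ 2.
Proof.
rewrite ler_norml => /andP[u1 u2].
have pu : 0 < 1 + u by lra.
have up : ln (1 + u) <= u by apply: le_ln1Dx; lra.
(* [ln (1 + u) = - ln (1 + v)] with [1 + v = (1 + u)^-1], and [ln (1 + v) <= v] *)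
have lo : 1 - (1 + u)^-1 <= ln (1 + u).
  have iu : 0 < (1 + u)^-1 by rewrite invr_gt0.
  have : ln (1 + ((1 + u)^-1 - 1)) <= (1 + u)^-1 - 1 by apply: le_ln1Dx; lra.
  by rewrite addrC subrK lnV ?posrE //; lra.
have : u - 2 * u ^+ 2 <= 1 - (1 + u)^-1.
  have -> : 1 - (1 + u)^-1 = u / (1 + u) by field; lra.
  rewrite ler_pdivlMr //.
  have : 0 <= u ^+ 2 * (1 + 2 * u) by apply: mulr_ge0; [exact: sqr_ge0 | lra].
  nra.
rewrite ler_norml; have := sqr_ge0 u; lra.
Qed.

(* For [x < 0] both logarithms are the junk value [ln _ = 0]. *)
Lemma ln_approx (x : R) : x != 0 -> exists c r K, [/\ 0 < r, 0 <= K &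
  forall h, `|h| <= r -> `|ln (x + h) - ln x - c * h| <= K * h ^+ 2].
Proof.
move=> x0; case: (ltgtP x 0) => [xlt|xgt|xe]; last by rewrite xe eqxx in x0.
  exists 0, (- x / 2), 0; split => [|//|h]; first lra.
  rewrite ler_norml => /andP[h1 h2].
  by rewrite !ln0; [rewrite mul0r !subr0 normr0 mul0r|lra|lra].
exists x^-1, (x / 2), (2 / x ^+ 2); split => [||h hx]; first lra.
  by rewrite divr_ge0 ?sqr_ge0.
have xu : x + h = x * (1 + h / x) by field; lra.
have ux : `|h / x| <= 1 / 2 by rewrite normf_div (gtr0_norm xgt) ler_pdivrMr //; lra.
rewrite xu lnM ?posrE //; last by have := ler_norml (h / x) (1 / 2); rewrite ux; lra.
have -> : ln x + ln (1 + h / x) - ln x - x^-1 * h = ln (1 + h / x) - h / x by ring.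
have -> : 2 / x ^+ 2 * h ^+ 2 = 2 * (h / x) ^+ 2 by field; lra.
exact: ln1D_approx.
Qed.

Lemma derive1_quadratic_approx (g : R -> R) (a r K : R) : 0 < r -> 0 <= K ->
  (forall t, `|t| <= r -> `|g t - g 0 - a * t| <= K * t ^+ 2) ->
  derive1 g 0 = a.
Proof.
move=> r0 K0 H; rewrite /derive1; apply: cvg_lim => //.
apply/cvgrPdist_le => eps eps0.
have m0 : 0 < Num.min r (eps / (K + 1)).
  by rewrite lt_min r0 /= divr_gt0 //; lra.
near=> t.
have tn0 : t != 0 by near: t; exact: nbhs_dnbhs_neq.
have : `|t| < Num.min r (eps / (K + 1)) by near: t; exact: dnbhs0_lt.
rewrite lt_min => /andP[tr te].
have tp : 0 < `|t| by rewrite normr_gt0.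
have Kt : K * `|t| <= eps.
  by move: te; rewrite ltr_pdivlMr; [nra | lra].
have -> : a - t^-1 *: (g (t + 0) - g 0) = - (t^-1 * (g t - g 0 - a * t)).
  by rewrite addr0 /GRing.scale /=; field.
rewrite normrN normrM normfV ler_pdivrMl //.
apply: le_trans (H t (ltW tr)) _.
rewrite -(real_normK (num_real t)) expr2 mulrA; nra.
Unshelve. all: by end_near.
Qed.

Lemma exists_geometric_le (eta c e : R) : 0 < eta -> eta < 1 -> 0 < e ->
  exists m : nat, c * eta ^+ m <= e.
Proof.
move=> eta0 eta1 e0.
have eta_lt1 : `|eta| < 1 by rewrite ger0_norm // ltW.
have c1 : 0 < `|c| + 1 by have := normr_ge0 c; lra.
have /cvgrPdist_lt /(_ (e / (`|c| + 1))) [] := cvg_expr eta_lt1.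
  by rewrite divr_gt0.
move=> N _ HN; exists N.
have etaN : 0 <= eta ^+ N by rewrite exprn_ge0 // ltW.
have := HN N (leqnn N); rewrite /= sub0r normrN ger0_norm // ltr_pdivlMr //.
have := ler_norm c; nra.
Qed.

End RealFacts.

Section ComplexParts.
Variable R : realType.
Local Notation C := R[i].
Local Notation Re := (@complex.Re R).
Local Notation Im := (@complex.Im R).

Lemma Re_addc (x y : C) : Re (x + y) = Re x + Re y. Proof. by case: x; case: y. Qed.
Lemma Im_addc (x y : C) : Im (x + y) = Im x + Im y. Proof. by case: x; case: y. Qed.
Lemma Re_mulc (x y : C) : Re (x * y) = Re x * Re y - Im x * Im y.
Proof. by case: x => a b; case: y. Qed.
Lemma Im_mulc (x y : C) : Im (x * y) = Re x * Im y + Im x * Re y.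
Proof. by case: x => a b; case: y => c d /=; rewrite addrC. Qed.
Lemma Re_oppc (x : C) : Re (- x) = - Re x. Proof. by case: x. Qed.
Lemma Re_conjc (x : C) : Re x^* = Re x. Proof. by case: x. Qed.
Lemma Im_conjc (x : C) : Im x^* = - Im x. Proof. by case: x. Qed.

Lemma conjcM (x y : C) : (x * y)^* = x^* * y^*. Proof. exact: rmorphM. Qed.

Lemma Re_sum (I : Type) (s : seq I) (P : pred I) (F : I -> C) :
  Re (\sum_(i <- s | P i) F i) = \sum_(i <- s | P i) Re (F i).
Proof. exact: (big_morph Re Re_addc). Qed.

Lemma Re_realMc (c : R) (x : C) : Re (c%:C * x) = c * Re x.
Proof. by rewrite Re_mulc /= mul0r subr0. Qed.

Lemma Im_realMc (c : R) (x : C) : Im (c%:C * x) = c * Im x.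
Proof. by rewrite Im_mulc /= mul0r addr0. Qed.

Lemma Re_divc_real (x : C) (c : R) : Re (x / c%:C) = Re x / c.
Proof. by rewrite -fmorphV mulrC Re_realMc mulrC. Qed.

End ComplexParts.

Section Expansion.
Variables (R : realType) (n : nat).
Local Notation C := R[i].
Local Notation Re := (@complex.Re R).
Local Notation Im := (@complex.Im R).

Definition rdot (g d : 'cV[C]_n) : R :=
  \sum_i (Re (g i 0) * Re (d i 0) + Im (g i 0) * Im (d i 0)).

Lemma rdotDl g1 g2 d : rdot (g1 + g2) d = rdot g1 d + rdot g2 d.
Proof.
rewrite /rdot -big_split; apply: eq_bigr => i _.
by rewrite /= mxE Re_addc Im_addc; ring.
Qed.

Lemma rdotZl (c : R) g d : rdot (c%:C *: g) d = c * rdot g d.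
Proof.
rewrite /rdot mulr_sumr; apply: eq_bigr => i _.
by rewrite mxE Re_realMc Im_realMc; ring.
Qed.

Lemma rdot0l d : rdot 0 d = 0.
Proof. by rewrite /rdot big1 // => i _; rewrite mxE !mul0r addr0. Qed.

Lemma evec_entry (z : C) (i j : 'I_n) : (z *: evec R i) j 0 = if j == i then z else 0.
Proof. by rewrite !mxE; case: (j == i); rewrite ?mulr1 ?mulr0. Qed.

Lemma rdot_evecl (z : C) i d : rdot (z *: evec R i) d = Re z * Re (d i 0) + Im z * Im (d i 0).
Proof.
rewrite /rdot (bigD1 i) //= big1 ?addr0 => [|j /negbTE ji]; first by rewrite evec_entry eqxx.
by rewrite evec_entry ji !mul0r addr0.
Qed.

Lemma rdot_evecr g (z : C) i : rdot g (z *: evec R i) = Re (g i 0) * Re z + Im (g i 0) * Im z.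
Proof.
rewrite /rdot (bigD1 i) //= big1 ?addr0 => [|j /negbTE ji]; first by rewrite evec_entry eqxx.
by rewrite evec_entry ji !mulr0 addr0.
Qed.

Lemma sqnorm_ge0 (d : 'cV[C]_n) : 0 <= sqnorm d.
Proof. by apply: sumr_ge0 => i _; rewrite addr_ge0 ?sqr_ge0. Qed.

Lemma sqnorm0 : sqnorm (0 : 'cV[C]_n) = 0.
Proof. by rewrite /sqnorm big1 // => i _; rewrite mxE expr0n addr0. Qed.

Lemma sqnorm_entry_le (d : 'cV[C]_n) i : Re (d i 0) ^+ 2 + Im (d i 0) ^+ 2 <= sqnorm d.
Proof.
rewrite /sqnorm (bigD1 i) //= lerDl.
by apply: sumr_ge0 => j _; rewrite addr_ge0 ?sqr_ge0.
Qed.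

Lemma sqnorm_evec (z : C) (i : 'I_n) : sqnorm (z *: evec R i) = Re z ^+ 2 + Im z ^+ 2.
Proof.
rewrite /sqnorm (bigD1 i) //= big1 ?addr0 => [|j /negbTE ji]; first by rewrite evec_entry eqxx.
by rewrite evec_entry ji /= expr0n add0r.
Qed.

End Expansion.

Section QuadExpansion.
Variables (R : realType) (n : nat) (th : 'cV[R[i]]_n).
Local Notation C := R[i].
Local Notation Re := (@complex.Re R).
Local Notation Im := (@complex.Im R).

Definition quad_expansion (f : 'cV[C]_n -> R) (g : 'cV[C]_n) := exists r K M : R,
  [/\ 0 < r, 0 <= K, 0 <= M & forall d, sqnorm d <= r ->
    `|f (th + d) - f th - rdot g d| <= K * sqnorm d /\
    (f (th + d) - f th) ^+ 2 <= M * sqnorm d].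

Definition expandable f := exists g, quad_expansion f g.

Lemma expandable_ext f h : expandable f -> f =1 h -> expandable h.
Proof. by move=> + /funext fh; rewrite fh. Qed.

Lemma expandable_cst c : expandable (fun _ => c).
Proof.
exists 0, 1, 0, 0; split => // d _.
by rewrite rdot0l !subrr normr0 expr0n /= !mul0r.
Qed.

Lemma expandable_coord (z : C) i : Re z ^+ 2 + Im z ^+ 2 = 1 ->
  expandable (fun x => Re z * Re (x i 0) + Im z * Im (x i 0)).
Proof.
move=> z1; exists (z *: evec R i), 1, 0, 1; split => // d _.
rewrite rdot_evecl mxE Re_addc Im_addc.
have -> : Re z * (Re (th i 0) + Re (d i 0)) + Im z * (Im (th i 0) + Im (d i 0))
  - (Re z * Re (th i 0) + Im z * Im (th i 0)) = Re z * Re (d i 0) + Im z * Im (d i 0).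
  by ring.
rewrite subrr normr0 mul0r mul1r; split => //.
apply: le_trans (sqnorm_entry_le d i).
have := sqr_ge0 (Re z * Im (d i 0) - Im z * Re (d i 0)).
have -> : Re (d i 0) ^+ 2 + Im (d i 0) ^+ 2 =
  (Re z ^+ 2 + Im z ^+ 2) * (Re (d i 0) ^+ 2 + Im (d i 0) ^+ 2) by rewrite z1 mul1r.
nra.
Qed.

Lemma expandable_add f h : expandable f -> expandable h -> expandable (fun x => f x + h x).
Proof.
move=> [g1 [r1 [K1 [M1 [r10 K10 M10 H1]]]]] [g2 [r2 [K2 [M2 [r20 K20 M20 H2]]]]].
exists (g1 + g2), (Num.min r1 r2), (K1 + K2), (2 * (M1 + M2)).
split; [by rewrite lt_min r10 | lra | lra |].
move=> d; rewrite le_min => /andP[/H1 [h1 h1'] /H2 [h2 h2']].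
rewrite rdotDl; split.
  have -> : f (th + d) + h (th + d) - (f th + h th) - (rdot g1 d + rdot g2 d)
    = (f (th + d) - f th - rdot g1 d) + (h (th + d) - h th - rdot g2 d) by ring.
  by apply: le_trans (ler_normD _ _) _; rewrite mulrDl lerD.
have -> : f (th + d) + h (th + d) - (f th + h th)
  = (f (th + d) - f th) + (h (th + d) - h th) by ring.
set u := f (th + d) - f th in h1' *; set v := h (th + d) - h th in h2' *.
have := sqr_ge0 (u - v); nra.
Qed.

Lemma expandable_scale c f : expandable f -> expandable (fun x => c * f x).
Proof.
move=> [g [r [K [M [r0 K0 M0 H]]]]].
exists (c%:C *: g), r, (`|c| * K), (c ^+ 2 * M).
split => //; [by rewrite mulr_ge0 | by rewrite mulr_ge0 ?sqr_ge0 |].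
move=> d /H [h1 h2]; rewrite rdotZl -!mulrBr; split.
  by rewrite normrM -mulrA ler_wpM2l.
by rewrite exprMn -mulrA ler_wpM2l ?sqr_ge0.
Qed.

Lemma expandable_mul f h : expandable f -> expandable h -> expandable (fun x => f x * h x).
Proof.
move=> [g1 [r1 [K1 [M1 [r10 K10 M10 H1]]]]] [g2 [r2 [K2 [M2 [r20 K20 M20 H2]]]]].
set F := f th; set G := h th.
exists (F%:C *: g2 + G%:C *: g1), (Num.min r1 r2),
  (`|F| * K2 + `|G| * K1 + (M1 + M2) / 2), (3 * (F ^+ 2 * M2 + G ^+ 2 * M1 + M1 * M2 * r2)).
split; [by rewrite lt_min r10 | | |].
- by have := normr_ge0 F; have := normr_ge0 G; nra.
- by have := sqr_ge0 F; have := sqr_ge0 G; have := mulr_ge0 M10 M20; nra.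
move=> d; rewrite le_min => /andP[d1 d2].
have [h1 h1'] := H1 d d1; have [h2 h2'] := H2 d d2.
have s0 := sqnorm_ge0 d.
have -> : f (th + d) = F + (f (th + d) - F) by ring.
have -> : h (th + d) = G + (h (th + d) - G) by ring.
rewrite rdotDl !rdotZl; split; first exact: mul_increment_approx.
exact: mul_increment_sqr_le.
Qed.

Lemma expandable_comp (phi : R -> R) f : expandable f ->
  (exists c r K, [/\ 0 < r, 0 <= K & forall h, `|h| <= r ->
    `|phi (f th + h) - phi (f th) - c * h| <= K * h ^+ 2]) ->
  expandable (fun x => phi (f x)).
Proof.
move=> [g [r [K [M [r0 K0 M0 H]]]]] [c [rr [KK [rr0 KK0 Hphi]]]].
have rr2 : 0 < rr ^+ 2 / (M + 1) by rewrite divr_gt0 ?exprn_gt0 //; lra.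
exists (c%:C *: g), (Num.min r (rr ^+ 2 / (M + 1))), (KK * M + `|c| * K),
  ((`|c| + KK * rr) ^+ 2 * M).
split; [by rewrite lt_min r0 | by rewrite addr_ge0 ?mulr_ge0 | by rewrite mulr_ge0 ?sqr_ge0 |].
move=> d; rewrite le_min => /andP[/H [h1 h2] d2].
have s0 := sqnorm_ge0 d.
set h := f (th + d) - f th in h1 h2 *.
have hrr : `|h| <= rr.
  have : h ^+ 2 <= rr ^+ 2.
    apply: le_trans h2 _; apply: le_trans (ler_wpM2l M0 d2) _.
    by rewrite mulrA ler_pdivrMr; [have := sqr_ge0 rr; nra | lra].
  by rewrite -(real_normK (num_real h)); have := normr_ge0 h; nra.
have Hh := Hphi h hrr; rewrite (_ : f (th + d) = f th + h); last by rewrite /h; ring.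
rewrite rdotZl; split; first exact: comp_increment_approx Hh h1 h2.
exact: comp_increment_sqr_le (ltW rr0) hrr Hh h2.
Qed.

Lemma expandable_ln f : expandable f -> f th != 0 -> expandable (fun x => ln (f x)).
Proof. by move=> Hf /ln_approx; apply: expandable_comp. Qed.

Lemma expandable_sum (I : Type) (s : seq I) (P : pred I) (F : I -> 'cV[C]_n -> R) :
  (forall i, P i -> expandable (F i)) -> expandable (fun x => \sum_(i <- s | P i) F i x).
Proof.
move=> HF; elim: s => [|j s IH].
  by apply: expandable_ext (expandable_cst 0) _ => x; rewrite big_nil.
case Pj: (P j).
  by apply: expandable_ext (expandable_add (HF j Pj) IH) _ => x; rewrite big_cons Pj.
by apply: expandable_ext IH _ => x; rewrite big_cons Pj.
Qed.

End QuadExpansion.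

Section ComplexGradient.
Variables (R : realType) (n : nat) (th : 'cV[R[i]]_n).
Local Notation C := R[i].
Local Notation Re := (@complex.Re R).
Local Notation Im := (@complex.Im R).

Lemma quad_expansion_derive f g i (z : C) : quad_expansion th f g ->
  Re z ^+ 2 + Im z ^+ 2 = 1 ->
  derive1 (fun t : R => f (th + (z * t%:C) *: evec R i)) 0 =
  Re (g i 0) * Re z + Im (g i 0) * Im z.
Proof.
move=> [r [K [M [r0 K0 _ H]]]] z1.
apply: (@derive1_quadratic_approx _ _ _ (Num.min 1 r) K) => //.
  by rewrite lt_min r0 ltr01.
move=> t; rewrite le_min => /andP[t1 tr].
have e1 : Re (z * t%:C) = Re z * t by rewrite Re_mulc /= mulr0 subr0.
have e2 : Im (z * t%:C) = Im z * t by rewrite Im_mulc /= mulr0 add0r.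
have sq : sqnorm ((z * t%:C) *: evec R i) = t ^+ 2.
  by rewrite sqnorm_evec e1 e2 !exprMn -mulrDl z1 mul1r.
have [|+ _] := H ((z * t%:C) *: evec R i).
  by rewrite sq -(real_normK (num_real t)); have := normr_ge0 t; nra.
rewrite sq rdot_evecr e1 e2 mulr0 scale0r addr0.
by congr (`|_| <= _); ring.
Qed.

Lemma cgrad_quad_expansion f g : quad_expansion th f g -> cgrad f th = (2%:R^-1 : C) *: g.
Proof.
move=> Hg; apply/matrixP => i j; rewrite ord1 !mxE.
have -> : dRe f th i = Re (g i 0).
  have := quad_expansion_derive i Hg (z := 1).
  rewrite /= expr1n expr0n addr0 mulr1 mulr0 addr0 => /(_ erefl) <-.
  by rewrite /dRe; congr (derive1 _ 0); apply: funext => t; rewrite mul1r.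
have -> : dIm f th i = Im (g i 0).
  have := quad_expansion_derive i Hg (z := 'i).
  by rewrite /= expr1n expr0n add0r mulr1 mulr0 add0r => /(_ erefl).
by rewrite [in RHS](complexE (g i 0)) mulrC.
Qed.

End ComplexGradient.

Section ComplexExpansion.
Variables (R : realType) (n : nat) (th : 'cV[R[i]]_n).
Local Notation C := R[i].
Local Notation Re := (@complex.Re R).
Local Notation Im := (@complex.Im R).
Local Notation expandable := (expandable th).

Definition cexpandable (F : 'cV[C]_n -> C) :=
  expandable (fun x => Re (F x)) /\ expandable (fun x => Im (F x)).

Lemma cexpandable_ext F G : cexpandable F -> F =1 G -> cexpandable G.
Proof. by move=> + /funext FG; rewrite FG. Qed.

Lemma cexpandable_cst c : cexpandable (fun _ => c).
Proof. by split; apply: expandable_cst. Qed.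

Lemma cexpandable_coord i : cexpandable (fun x => x i 0).
Proof.
split.
  apply: expandable_ext (expandable_coord th (z := 1) i _) _ => [|x] /=.
    by rewrite expr1n expr0n addr0.
  by rewrite mul1r mul0r addr0.
apply: expandable_ext (expandable_coord th (z := 'i) i _) _ => [|x] /=.
  by rewrite expr1n expr0n add0r.
by rewrite mul1r mul0r add0r.
Qed.

Lemma cexpandable_add F G : cexpandable F -> cexpandable G -> cexpandable (fun x => F x + G x).
Proof.
move=> [F1 F2] [G1 G2]; split.
  by apply: expandable_ext (expandable_add F1 G1) _ => x; rewrite Re_addc.
by apply: expandable_ext (expandable_add F2 G2) _ => x; rewrite Im_addc.
Qed.

Lemma cexpandable_mul F G : cexpandable F -> cexpandable G -> cexpandable (fun x => F x * G x).
Proof.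
move=> [F1 F2] [G1 G2]; split.
  apply: expandable_ext
    (expandable_add (expandable_mul F1 G1) (expandable_scale (-1) (expandable_mul F2 G2))) _.
  by move=> x; rewrite Re_mulc mulN1r.
by apply: expandable_ext (expandable_add (expandable_mul F1 G2) (expandable_mul F2 G1)) _ => x;
  rewrite Im_mulc.
Qed.

Lemma cexpandable_conj F : cexpandable F -> cexpandable (fun x => (F x)^*).
Proof.
move=> [F1 F2]; split; first by apply: expandable_ext F1 _ => x; rewrite Re_conjc.
by apply: expandable_ext (expandable_scale (-1) F2) _ => x; rewrite Im_conjc mulN1r.
Qed.

Lemma cexpandable_sum (I : Type) (s : seq I) (P : pred I) (F : I -> 'cV[C]_n -> C) :
  (forall i, P i -> cexpandable (F i)) -> cexpandable (fun x => \sum_(i <- s | P i) F i x).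
Proof.
move=> HF; elim: s => [|j s IH].
  by apply: cexpandable_ext (cexpandable_cst 0) _ => x; rewrite big_nil.
case Pj: (P j).
  by apply: cexpandable_ext (cexpandable_add (HF j Pj) IH) _ => x; rewrite big_cons Pj.
by apply: cexpandable_ext IH _ => x; rewrite big_cons Pj.
Qed.

Lemma cexpandable_prod (I : Type) (s : seq I) (P : pred I) (F : I -> 'cV[C]_n -> C) :
  (forall i, P i -> cexpandable (F i)) -> cexpandable (fun x => \prod_(i <- s | P i) F i x).
Proof.
move=> HF; elim: s => [|j s IH].
  by apply: cexpandable_ext (cexpandable_cst 1) _ => x; rewrite big_nil.
case Pj: (P j).
  by apply: cexpandable_ext (cexpandable_mul (HF j Pj) IH) _ => x; rewrite big_cons Pj.
by apply: cexpandable_ext IH _ => x; rewrite big_cons Pj.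
Qed.

Definition mx_expandable p q (F : 'cV[C]_n -> 'M[C]_(p, q)) :=
  forall i j, cexpandable (fun x => F x i j).

Lemma mx_expandable_cst p q (A : 'M[C]_(p, q)) : mx_expandable (fun _ => A).
Proof. by move=> i j; apply: cexpandable_cst. Qed.

Lemma mx_expandable_add p q (F G : 'cV[C]_n -> 'M[C]_(p, q)) :
  mx_expandable F -> mx_expandable G -> mx_expandable (fun x => F x + G x).
Proof.
by move=> HF HG i j; apply: cexpandable_ext (cexpandable_add (HF i j) (HG i j)) _ => x; rewrite mxE.
Qed.

Lemma mx_expandable_mul p q r (F : 'cV[C]_n -> 'M[C]_(p, q)) (G : 'cV[C]_n -> 'M[C]_(q, r)) :
  mx_expandable F -> mx_expandable G -> mx_expandable (fun x => F x *m G x).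
Proof.
move=> HF HG i j.
apply: cexpandable_ext (cexpandable_sum (index_enum _) (P := xpredT)
  (F := fun k x => F x i k * G x k j) _) _ => [k _|x]; first exact: cexpandable_mul.
by rewrite mxE.
Qed.

Lemma mx_expandable_hadj p q (F : 'cV[C]_n -> 'M[C]_(p, q)) :
  mx_expandable F -> mx_expandable (fun x => hadj (F x)).
Proof.
by move=> HF i j; apply: cexpandable_ext (cexpandable_conj (HF j i)) _ => x; rewrite !mxE.
Qed.

Lemma mx_expandable_diag : mx_expandable (fun x : 'cV[C]_n => diag_mx x^T).
Proof.
move=> i j; case ij: (i == j).
  by apply: cexpandable_ext (cexpandable_coord i) _ => x; rewrite !mxE ij mulr1n.
by apply: cexpandable_ext (cexpandable_cst 0) _ => x; rewrite !mxE ij mulr0n.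
Qed.

Lemma cexpandable_det p (F : 'cV[C]_n -> 'M[C]_p) :
  mx_expandable F -> cexpandable (fun x => \det (F x)).
Proof.
move=> HF; apply: cexpandable_sum => s _; apply: cexpandable_mul; first exact: cexpandable_cst.
by apply: cexpandable_prod => i _; apply: HF.
Qed.

End ComplexExpansion.

Section RegularizedGram.
Variable R : realType.
Local Notation C := R[i].
Local Notation Re := (@complex.Re R).
Local Notation Im := (@complex.Im R).

Lemma hadjM m p q (X : 'M[C]_(m, p)) (Y : 'M[C]_(p, q)) : hadj (X *m Y) = hadj Y *m hadj X.
Proof.
apply/matrixP => i j; rewrite !mxE rmorph_sum; apply: eq_bigr => k _.
by rewrite !mxE rmorphM mulrC.
Qed.

Lemma hadjK m p (X : 'M[C]_(m, p)) : hadj (hadj X) = X.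
Proof. by apply/matrixP => i j; rewrite !mxE conjcK. Qed.

Lemma hadjD m p (X Y : 'M[C]_(m, p)) : hadj (X + Y) = hadj X + hadj Y.
Proof. by apply/matrixP => i j; rewrite !mxE rmorphD. Qed.

Lemma hadj_real_scalar m (c : R) : hadj ((c%:C)%:M : 'M[C]_m) = (c%:C)%:M.
Proof.
apply/matrixP => i j; rewrite !mxE eq_sym.
by case: (i == j); rewrite ?mulr1n ?mulr0n ?conjc_real ?conjc0.
Qed.

Lemma hadj_sum m p (I : Type) (s : seq I) (P : pred I) (F : I -> 'M[C]_(m, p)) :
  hadj (\sum_(i <- s | P i) F i) = \sum_(i <- s | P i) hadj (F i).
Proof.
apply: (big_morph (@hadj R m p)) => [X Y|]; first exact: hadjD.
by apply/matrixP => i j; rewrite !mxE conjc0.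
Qed.

Lemma det_hermitian_real m (M : 'M[C]_m) : hadj M = M -> Im (\det M) = 0.
Proof.
move=> hM; have := congr1 Im (det_map_mx conjc M).
rewrite -det_tr -/(hadj M) hM Im_conjc /=; lra.
Qed.

Lemma sqnorm_gt0 p (v : 'cV[C]_p) : v != 0 -> 0 < sqnorm v.
Proof.
move=> vn0; have [k vk] : exists k, v k 0 != 0.
  apply/existsP; apply: contraR vn0 => /existsPn vk0.
  by apply/eqP/matrixP => i j; rewrite ord1 mxE; apply/eqP; rewrite -[_ == _]negbK vk0.
apply: lt_le_trans (sqnorm_entry_le v k).
move: vk; case: (v k 0) => a b /=; rewrite eq_complex /= negb_and.
have sqr_gt0 (x : R) : x != 0 -> 0 < x ^+ 2 by move=> x0; rewrite lt0r sqrf_eq0 x0 sqr_ge0.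
by case/orP => /sqr_gt0; have := sqr_ge0 a; have := sqr_ge0 b; lra.
Qed.

Lemma Re_mul_hadj_row p (z : 'rV[C]_p) : Re ((z *m hadj z) 0 0) = sqnorm z^T.
Proof.
rewrite mxE Re_sum; apply: eq_bigr => k _.
by rewrite !mxE Re_mulc Re_conjc Im_conjc; ring.
Qed.

Section Gram.
Variables (r t d : nat) (A : 'M[C]_(r, t)) (I : Type) (s : seq I) (P : pred I)
  (W : I -> 'M[C]_(t, d)) (s2 : R).
Local Notation Wb := (\sum_(j <- s | P j) W j *m hadj (W j)).
Local Notation M := ((s2%:C)%:M + A *m Wb *m hadj A).

Lemma hadj_regularized_gram : hadj M = M.
Proof.
have hWb : hadj Wb = Wb by rewrite hadj_sum; apply: eq_bigr => j _; rewrite hadjM hadjK.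
by rewrite hadjD hadj_real_scalar !hadjM hadjK hWb mulmxA.
Qed.

Lemma regularized_gram_form (v : 'rV[C]_r) : Re ((v *m M *m hadj v) 0 0) =
  s2 * sqnorm v^T + \sum_(j <- s | P j) sqnorm (v *m A *m W j)^T.
Proof.
rewrite mulmxDr mulmxDl mul_mx_scalar -scalemxAl mxE [X in Re (X + _)]mxE Re_addc.
rewrite Re_realMc Re_mul_hadj_row !mulmxA mulmx_sumr !mulmx_suml summxE Re_sum.
by congr (_ + _); apply: eq_bigr => j _; rewrite -Re_mul_hadj_row !hadjM !mulmxA.
Qed.

Lemma Re_det_regularized_gram_neq0 : 0 < s2 -> Re (\det M) != 0.
Proof.
move=> s20.
have dn0 : \det M != 0.
  apply/negP => /det0P [v vn0 vM].
  have vMv : (v *m M *m hadj v) 0 0 = 0 by rewrite vM mul0mx mxE.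
  have := regularized_gram_form v; rewrite vMv.
  have : 0 < s2 * sqnorm v^T by rewrite mulr_gt0 // sqnorm_gt0 // trmx_eq0.
  have : 0 <= \sum_(j <- s | P j) sqnorm (v *m A *m W j)^T.
    by rewrite sumr_ge0 // => j _; exact: sqnorm_ge0.
  by move=> ? ? /=; lra.
apply: contra dn0 => /eqP re0; apply/eqP.
by move: re0 (det_hermitian_real hadj_regularized_gram); case: (\det M) => a b /= -> ->.
Qed.

End Gram.
End RegularizedGram.

Section WeightedSumRate.
Variables (R : realType) (Ns : nat) (th : 'cV[R[i]]_Ns).
Local Notation C := R[i].

Lemma expandable_logdet_regularized_gram r t d (A : 'cV[C]_Ns -> 'M[C]_(r, t))
    (I : Type) (s : seq I) (P : pred I) (W : I -> 'M[C]_(t, d)) (s2 : R) :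
  mx_expandable th A -> 0 < s2 ->
  expandable th (fun x => logdet ((s2%:C)%:M +
    A x *m (\sum_(j <- s | P j) W j *m hadj (W j)) *m hadj (A x))).
Proof.
move=> HA s20; apply: expandable_ln; last exact: Re_det_regularized_gram_neq0.
apply: (cexpandable_det _).1; apply: mx_expandable_add; first exact: mx_expandable_cst.
apply: mx_expandable_mul (mx_expandable_hadj HA).
exact: mx_expandable_mul HA (mx_expandable_cst _ _).
Qed.

Lemma mx_expandable_Hk Nt Nr (D : 'M[C]_(Nr, Nt)) (U : 'M[C]_(Nr, Ns)) (G : 'M[C]_(Ns, Nt)) :
  mx_expandable th (Hk D U G).
Proof.
apply: mx_expandable_add; first exact: mx_expandable_cst.
apply: mx_expandable_mul (mx_expandable_cst _ _).
exact: mx_expandable_mul (mx_expandable_cst _ _) (mx_expandable_diag _).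
Qed.

Lemma expandable_wsr K Nt Nr Nd (G : 'M[C]_(Ns, Nt)) (U : 'I_K -> 'M[C]_(Nr, Ns))
    (D : 'I_K -> 'M[C]_(Nr, Nt)) (W : 'I_K -> 'M[C]_(Nt, Nd)) (s2 : R) (w : 'I_K -> R) :
  0 < s2 -> expandable th (wsr G U D W s2 w).
Proof.
move=> s20; apply: expandable_sum => k _; apply: expandable_scale.
have HA := mx_expandable_Hk (D k) (U k) G.
have E1 := expandable_logdet_regularized_gram (index_enum 'I_K) xpredT W HA s20.
have E2 := expandable_logdet_regularized_gram (index_enum 'I_K) (fun j => j != k) W HA s20.
by apply: expandable_ext (expandable_add E1 (expandable_scale (-1) E2)) _ => x; rewrite mulN1r.
Qed.

End WeightedSumRate.

Section UnitCircle.
Variable R : realType.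
Local Notation C := R[i].
Local Notation Re := (@complex.Re R).
Local Notation Im := (@complex.Im R).

Lemma unit_step_gain_ineq (p q al s : R) : p ^+ 2 + q ^+ 2 = 1 -> 0 < al -> al <= 1 / 2 ->
  0 <= s -> s ^+ 2 = (1 + al * p) ^+ 2 + (al * q) ^+ 2 ->
  al * q ^+ 2 - 6 * al ^+ 2 <= (p + al) / s - p.
Proof.
move=> pq al0 al1 s0 ss.
have q2 : q ^+ 2 <= 1 by have := sqr_ge0 p; lra.
have /andP[pl pu] : -1 <= p <= 1 by apply/andP; split; nra.
set a := 1 + al * p in ss *.
have a12 : 1 / 2 <= a by rewrite /a; nra.
have sa : a <= s by nra.
(* [e] is the second-order part of [s = 1 + al p + e]. *)
set e := s - a.
have e0 : 0 <= e by rewrite subr_ge0.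
have ee : e * (s + a) = s ^+ 2 - a ^+ 2 by rewrite /e; ring.
rewrite ss addrAC subrr add0r in ee.
have e1 : e <= al ^+ 2 by nra.
have s_gt0 : 0 < s by lra.
have num : al * q ^+ 2 - p * e = p + al - p * s.
  by rewrite (_ : q ^+ 2 = 1 - p ^+ 2) /e /a; [ring | lra].
have -> : (p + al) / s - p = (al * q ^+ 2 - p * e) / s by rewrite num; field; rewrite gt_eqF.
rewrite ler_pdivlMr //.
have -> : s = a + e by rewrite /e; ring.
have f1 : al ^+ 2 * (q ^+ 2 * p) <= al ^+ 2.
  by rewrite ler_piMr ?sqr_ge0 //; have := sqr_ge0 q; nra.
have f2 : al * (q ^+ 2 * e) <= al * al ^+ 2.
  by rewrite ler_pM2l //; have := sqr_ge0 q; nra.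
have f3 : - al ^+ 2 <= p * e by nra.
have f4 : 3 * al ^+ 2 <= 6 * al ^+ 2 * (a + e) by have := sqr_ge0 al; nra.
have f5 : al * al ^+ 2 <= al ^+ 2 by rewrite ler_piMl ?sqr_ge0 //; lra.
rewrite /a in f4 *; nra.
Qed.

Definition unit_proj (v : C) : C := if v == 0 then 1 else v / `|v|.

Lemma unit_proj_dist (t v : C) : `|t| = 1 -> `|unit_proj v - t| <= 2%:R * `|v - t|.
Proof.
move=> t1; rewrite /unit_proj mulr_natl mulr2n; case: eqP => [->|/eqP v0].
  by rewrite sub0r normrN t1; apply: le_trans (ler_normB _ _) _; rewrite normr1 t1.
have nv : `|v| != 0 by rewrite normr_eq0.
have -> : v / `|v| - t = v / `|v| * (1 - `|v|) + (v - t) by field.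
apply: le_trans (ler_normD _ _) _; rewrite lerD2r normrM normf_div normr_id divff // mul1r.
by rewrite -t1 distrC; apply: le_trans (ler_dist_dist _ _) _; rewrite distrC.
Qed.

Lemma unit_mul_conj (t : C) : `|t| = 1 -> t * t^* = 1.
Proof. by move=> t1; rewrite -sqr_normc t1 expr1n. Qed.

Lemma add_unit_rot (t u : C) (al : R) : `|t| = 1 ->
  t + al%:C * u = t * (1 + al%:C * (u * t^*)).
Proof.
move=> /unit_mul_conj tt; rewrite mulrDr mulr1; congr (_ + _).
by rewrite mulrCA [t * _]mulrCA tt mulr1.
Qed.

Lemma unit_proj_rot (t z : C) : `|t| = 1 -> z != 0 -> unit_proj (t * z) = t * (z / `|z|).
Proof.
move=> t1 z0; rewrite /unit_proj mulf_eq0 (negbTE z0) -normr_eq0 t1 oner_eq0 /=.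
by rewrite normrM t1 mul1r mulrA.
Qed.

Section Step.
Variables (t u : C) (al : R).
Hypotheses (t1 : `|t| = 1) (u1 : `|u| = 1) (al0 : 0 < al) (al1 : al <= 1 / 2).
Local Notation w := (u * t^*).
Local Notation z := (1 + al%:C * w).

Let w1 : `|w| = 1. Proof. by rewrite normrM normcJ t1 u1 mulr1. Qed.

Let pq : Re w ^+ 2 + Im w ^+ 2 = 1.
Proof. by apply: (@complexI R); rewrite add_Re2_Im2 w1 expr1n. Qed.

Let Rez : Re z = 1 + al * Re w. Proof. by rewrite Re_addc Re_realMc. Qed.
Let Imz : Im z = al * Im w. Proof. by rewrite Im_addc Im_realMc /= add0r. Qed.

Let Rez_gt0 : 0 < Re z.
Proof.
have : -1 <= Re w by have := pq; have := sqr_ge0 (Im w); nra.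
by rewrite Rez => h; have := ler_wpM2l (ltW al0) h; have := al1; lra.
Qed.

Let z0 : z != 0.
Proof. by apply: contraTneq Rez_gt0 => ->; rewrite ltxx. Qed.

Lemma unit_proj_gain :
  al * Im w ^+ 2 - 6 * al ^+ 2 <= Re (u^* * (unit_proj (t + al%:C * u) - t)).
Proof.
set s := Num.sqrt (Re z ^+ 2 + Im z ^+ 2).
have ss : s ^+ 2 = (1 + al * Re w) ^+ 2 + (al * Im w) ^+ 2.
  by rewrite sqr_sqrtr ?addr_ge0 ?sqr_ge0 // -Rez -Imz.
have uw : u^* * t = w^* by rewrite conjcM; congr (_ * _); apply/esym/conjcK.
have wz : w^* * z = w^* + al%:C.
  by rewrite mulrDr mulr1 mulrCA [w^* * w]mulrC (unit_mul_conj w1) mulr1.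
rewrite add_unit_rot // unit_proj_rot // normc_def -/s.
have -> : u^* * (t * (z / s%:C) - t) = u^* * t * z / s%:C - u^* * t by ring.
rewrite uw wz Re_addc Re_oppc Re_divc_real Re_addc !Re_conjc /=.
exact: unit_step_gain_ineq pq al0 al1 (sqrtr_ge0 _) ss.
Qed.

Lemma unit_proj_real_rot : Im w = 0 -> unit_proj (t + al%:C * u) = t.
Proof.
move=> q0; rewrite add_unit_rot // unit_proj_rot // ger0_norm ?divff ?mulr1 //.
by rewrite [z]complexE Imz q0 mulr0 mulr0 addr0 ler0c ltW.
Qed.

End Step.
End UnitCircle.

Section UnitDirection.
Variable R : realType.
Local Notation C := R[i].
Local Notation Re := (@complex.Re R).
Local Notation Im := (@complex.Im R).

Definition unit_dir (g : C) : C := `|g|^-1 * g.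

Lemma unit_dir0 : unit_dir 0 = 0. Proof. by rewrite /unit_dir mulr0. Qed.

Lemma norm_unit_dir (g : C) : g != 0 -> `|unit_dir g| = 1.
Proof. by move=> g0; rewrite normrM normfV normr_id mulVf // normr_eq0. Qed.

Lemma normc_real (z : C) : `|z| = (Re `|z|)%:C. Proof. by rewrite normc_def. Qed.

Lemma Re_normc_ge0 (z : C) : 0 <= Re `|z|. Proof. by rewrite normc_def sqrtr_ge0. Qed.

Lemma unit_dir_scale (c g : C) : 0 < c -> unit_dir (c * g) = unit_dir g.
Proof.
move=> c0; rewrite /unit_dir normrM gtr0_norm // invfM mulrACA mulVf ?mul1r //.
by rewrite gt_eqF.
Qed.

Lemma sqr_parts_le (z : C) (c : R) : 0 <= c -> `|z| <= c%:C -> Re z ^+ 2 + Im z ^+ 2 <= c ^+ 2.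
Proof.
move=> c0 zc; rewrite -lecR add_Re2_Im2 rmorphXn lerXn2r ?nnegrE //.
by rewrite ler0c.
Qed.

Lemma Re_conj_mulc (x y : C) : Re (x^* * y) = Re x * Re y + Im x * Im y.
Proof. by case: x => a b; case: y => c d /=; rewrite mulNr opprK. Qed.

Section Step.
Variables (t g : C) (al : R).
Hypothesis t1 : `|t| = 1.
Local Notation d := (unit_proj (t + al%:C * unit_dir g) - t).

Lemma unit_dir_step_dist : 0 <= al -> Re d ^+ 2 + Im d ^+ 2 <= 4 * al ^+ 2.
Proof.
move=> al0; have u1 : `|unit_dir g| <= 1.
  by case: (eqVneq g 0) => [->|/norm_unit_dir ->]; rewrite ?unit_dir0 ?normr0.
rewrite (_ : 4 * al ^+ 2 = (2 * al) ^+ 2); last by ring.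
apply: sqr_parts_le; first by rewrite mulr_ge0.
apply: le_trans (unit_proj_dist _ t1) _.
rewrite addrAC subrr add0r normrM ger0_norm ?ler0c // rmorphM rmorph_nat.
by rewrite ler_pM2l ?ltr0n // ler_piMr ?ler0c.
Qed.

Lemma unit_dir_step_gain : 0 < al -> al <= 1 / 2 ->
  Re `|g| * (al * Im (unit_dir g * t^*) ^+ 2 - 6 * al ^+ 2) <= Re g * Re d + Im g * Im d.
Proof.
move=> al0 al1; case: (eqVneq g 0) => [->|g0]; first by rewrite normr0 /= !mul0r addr0.
have rho0 : 0 < Re `|g| by rewrite -ltcR -normc_real normr_gt0.
set u := unit_dir g; have := unit_proj_gain t1 (norm_unit_dir g0) al0 al1.
have uE : u = (Re `|g|)^-1%:C * g by rewrite /u /unit_dir normc_real fmorphV.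
rewrite -/u Re_conj_mulc [in Re u]uE [in Im u]uE Re_realMc Im_realMc => /(ler_wpM2l (ltW rho0)).
move=> h; apply: (le_trans h); rewrite le_eqVlt; apply/orP; left; apply/eqP.
by field; rewrite gt_eqF.
Qed.

Lemma unit_dir_step_fixed : 0 < al -> al <= 1 / 2 -> Im (unit_dir g * t^*) = 0 ->
  unit_proj (t + al%:C * unit_dir g) = t.
Proof.
move=> al0 al1 q0; case: (eqVneq g 0) => [->|g0].
  have t0 : t != 0 by rewrite -normr_eq0 t1 oner_eq0.
  by rewrite unit_dir0 mulr0 addr0 /unit_proj (negbTE t0) t1 divr1.
exact: unit_proj_real_rot t1 (norm_unit_dir g0) al0 al1 q0.
Qed.

End Step.
End UnitDirection.

Section ArmijoStep.
Variables (R : realType) (n : nat).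
Local Notation C := R[i].
Local Notation Re := (@complex.Re R).
Local Notation Im := (@complex.Im R).

(* When [g] is the gradient of [f] at [th], this is the right derivative of
   [α |-> f (theta_step f th α)] at [0]. *)
Definition projected_slope (th g : 'cV[C]_n) : R :=
  \sum_i Re `|g i 0| * Im (unit_dir (g i 0) * (th i 0)^*) ^+ 2.

Variables (f : 'cV[C]_n -> R) (th g : 'cV[C]_n).
Hypotheses (thQ : inQ th) (fg : quad_expansion th f g).

Lemma theta_stepE al :
  theta_step f th al = \col_i unit_proj (th i 0 + al%:C * unit_dir (g i 0)).
Proof.
apply/matrixP => i j; rewrite ord1 /theta_step /projQ /Xi (cgrad_quad_expansion fg).
rewrite mul_diag_mx !mxE -/(unit_dir ((2%:R^-1 : C) * g i 0)) unit_dir_scale //.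
Qed.

Lemma sqnorm_theta_step_le al : 0 <= al ->
  sqnorm (theta_step f th al - th) <= 4 * n%:R * al ^+ 2.
Proof.
move=> al0; apply: le_trans (_ : \sum_(i < n) 4 * al ^+ 2 <= _).
  apply: ler_sum => i _; rewrite theta_stepE !mxE.
  by have := unit_dir_step_dist (g i 0) (thQ i) al0.
by rewrite sumr_const card_ord -[_ *+ n]mulr_natr mulrAC.
Qed.

Lemma rdot_theta_step_ge al : 0 < al -> al <= 1 / 2 ->
  al * projected_slope th g - 6 * al ^+ 2 * \sum_i Re `|g i 0| <=
  rdot g (theta_step f th al - th).
Proof.
move=> al0 al1; rewrite /projected_slope !mulr_sumr -sumrB; apply: ler_sum => i _.
rewrite theta_stepE !mxE; apply: le_trans _ (unit_dir_step_gain (g i 0) (thQ i) al0 al1).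
by rewrite le_eqVlt; apply/orP; left; apply/eqP; ring.
Qed.

Lemma theta_step_stationary al : projected_slope th g = 0 -> 0 < al -> al <= 1 / 2 ->
  theta_step f th al = th.
Proof.
move=> S0 al0 al1; apply/matrixP => i j; rewrite ord1 theta_stepE mxE.
have q0 : Im (unit_dir (g i 0) * (th i 0)^*) = 0.
  have /eqP := psumr_eq0P (fun i _ => mulr_ge0 (Re_normc_ge0 _) (sqr_ge0 _)) S0 (i := i) isT.
  rewrite mulf_eq0 sqrf_eq0 => /orP[/eqP rho0|/eqP //].
  have -> : g i 0 = 0 by apply/eqP; rewrite -normr_eq0 normc_real rho0.
  by rewrite unit_dir0 mul0r.
by rewrite (unit_dir_step_fixed (thQ i) al0 al1 q0).
Qed.

Lemma accept_small_step r K al beta : 0 <= K ->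
    (forall d, sqnorm d <= r -> `|f (th + d) - f th - rdot g d| <= K * sqnorm d) ->
    0 < al -> al <= 1 / 2 -> 4 * n%:R * al ^+ 2 <= r ->
    al * (6 * \sum_i Re `|g i 0| + 4 * n%:R * (K + 1)) <= projected_slope th g ->
    0 <= beta -> beta <= 1 -> accept f th beta al.
Proof.
move=> K0 Hf al0 al1 alr alS b0 b1; rewrite /accept.
set d := theta_step f th al - th.
have dE : th + d = theta_step f th al by rewrite /d addrC subrK.
have sq : sqnorm d <= 4 * n%:R * al ^+ 2 := sqnorm_theta_step_le (ltW al0).
have lin := rdot_theta_step_ge al0 al1.
have := Hf d (le_trans sq alr); rewrite dE ler_norml => /andP[hf _].
have coef : beta / (2 * n%:R) * sqnorm d <= sqnorm d.
  apply: ler_piMl (sqnorm_ge0 d) _.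
  case: (posnP n) => [n0|n_gt0]; first by rewrite n0 mulr0 invr0 mulr0 ler01.
  rewrite ler_pdivrMr ?mulr_gt0 ?ltr0n // mul1r.
  have : 1 <= n%:R :> R by rewrite ler1n.
  lra.
have hK : K * sqnorm d <= K * (4 * n%:R * al ^+ 2) by rewrite ler_wpM2l.
have := ler_wpM2l (ltW al0) alS.
have -> : al * (al * (6 * \sum_i Re `|g i 0| + 4 * n%:R * (K + 1))) =
  6 * al ^+ 2 * \sum_i Re `|g i 0| + K * (4 * n%:R * al ^+ 2) + 4 * n%:R * al ^+ 2 by ring.
lra.
Qed.

Lemma exists_accept_threshold : exists2 a0 : R, 0 < a0 &
  forall al beta, 0 < al -> al <= a0 -> 0 < beta -> beta <= 1 -> accept f th beta al.
Proof.
have : 0 <= projected_slope th g.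
  by apply: sumr_ge0 => i _; rewrite mulr_ge0 ?Re_normc_ge0 ?sqr_ge0.
rewrite le_eqVlt => /orP[/eqP/esym S0|S_gt0].
  exists (1 / 2) => [|al beta al0 al1 _ _]; first lra.
  by rewrite /accept theta_step_stationary // subrr sqnorm0 mulr0 addr0.
have [r [K [M [r0 K0 _ Hf]]]] := fg.
set B := 6 * \sum_i Re `|g i 0| + 4 * n%:R * (K + 1).
have B0 : 0 <= B.
  have : 0 <= \sum_i Re `|g i 0| by apply: sumr_ge0 => i _; exact: Re_normc_ge0.
  by have := ler0n R n; rewrite /B; nra.
exists (Num.min (1 / 2) (Num.min (projected_slope th g / (B + 1)) (r / (4 * n%:R + 1)))).
  rewrite !lt_min; apply/and3P; split; first lra.
    by rewrite divr_gt0 //; lra.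
  by rewrite divr_gt0 //; have := ler0n R n; lra.
move=> al beta al0; rewrite !le_min => /and3P[al1 alS alr] b0 b1.
apply: (accept_small_step K0 (fun d hd => (Hf d hd).1) al0 al1 _ _ (ltW b0) b1).
  move: alr; rewrite ler_pdivlMr; last by have := ler0n R n; lra.
  have : al ^+ 2 <= al by nra.
  have := ler0n R n; nra.
have B1 : 0 < B + 1 by lra.
by move: alS; rewrite -/B ler_pdivlMr //; nra.
Qed.

End ArmijoStep.

Local Close Scope complex_scope.

Theorem lemma1 (R : realType) (K Ns Nt Nr Nd : nat)
  (G : 'M[R[i]]_(Ns, Nt)) (U : 'I_K -> 'M[R[i]]_(Nr, Ns))
  (D : 'I_K -> 'M[R[i]]_(Nr, Nt)) (W : 'I_K -> 'M[R[i]]_(Nt, Nd))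
  (s2 : R) (w : 'I_K -> R) (eta : R) (th : 'cV[R[i]]_Ns) :
  0 < s2 -> (forall k, 0 <= w k) -> 0 < eta -> eta < 1 -> inQ th ->
  exists beta0 : R, 0 < beta0 /\
    forall beta : R, 0 < beta -> beta <= beta0 ->
    forall c : R, 0 < c ->
    exists m : nat, accept (wsr G U D W s2 w) th beta (c * eta ^+ m).
Proof.
move=> s20 _ eta0 eta1 thQ.
have [g fg] := expandable_wsr th G U D W w s20.
have [a0 a0_gt0 Ha0] := exists_accept_threshold thQ fg.
exists 1; split => // beta b0 b1 c c0.
have [m hm] := exists_geometric_le c eta0 eta1 a0_gt0.
by exists m; apply: Ha0 => //; rewrite mulr_gt0 // exprn_gt0.
Qed.
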